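(* Let $M$ be the monoid defined by the presentation $\langle a,b,x,y \mid bxy=xyb,\ byx=yxb,\ axyb=byxa\rangle$. Then for every $\alpha\in\mathbb{N}$, the elements represented by $a(xy)^\alpha b$ and $b(yx)^\alpha a$ lie in the same connected component of the cyclic shift graph $K(M)$, and the distance between them in $K(M)$ is at least $\alpha-1$. Consequently, although $M$ is multihomogeneous, there is no bound on the diameters of the connected components of $K(M)$.
   Context: For a monoid $M$ and $s,t\in M$, write $s\sim t$ if there exist $x,y\in M$ with $s=xy$ and $t=yx$ (a cyclic shift). The cyclic shift graph $K(M)$ is the undirected graph with vertex set $M$ and an edge between $s$ and $t$ iff $s\sim t$; its connected components are the classes of the reflexive–transitive closure of $\sim$, and distances/diameters are graph distances. A presentation is multihomogeneous if each defining relation $(u,v)$ has $u$ and $v$ containing the same number of occurrences of each generator; a monoid is multihomogeneous if it admits such a presentation. *)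

From mathcomp Require Import all_boot.
From Stdlib Require Import Relations.
Set Implicit Arguments. Unset Strict Implicit. Unset Printing Implicit Defensive.

Definition letter := 'I_4.
Definition la : letter := @Ordinal 4 0 isT.
Definition lb : letter := @Ordinal 4 1 isT.
Definition lx : letter := @Ordinal 4 2 isT.
Definition ly : letter := @Ordinal 4 3 isT.

Definition word := seq letter.

Definition rels : seq (word * word) :=
  [:: ([:: lb; lx; ly], [:: lx; ly; lb]);
      ([:: lb; ly; lx], [:: ly; lx; lb]);
      ([:: la; lx; ly; lb], [:: lb; ly; lx; la])].

Inductive step : word -> word -> Prop :=
  | step_intro (u v l r : word) :
      (l, r) \in rels -> step (u ++ l ++ v) (u ++ r ++ v).

Definition eqM : word -> word -> Prop := clos_refl_sym_trans word step.

Definition cshift (s t : word) : Prop :=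
  exists p q : word, eqM s (p ++ q) /\ eqM t (q ++ p).

Fixpoint Kpath (n : nat) (s t : word) : Prop :=
  match n with
  | 0 => eqM s t
  | n'.+1 => exists u : word, cshift s u /\ Kpath n' u t
  end.

Definition Kconnected (s t : word) : Prop := exists n, Kpath n s t.

Definition multihomogeneous (R : seq (word * word)) : bool :=
  all (fun p => perm_eq p.1 p.2) R.

Definition w1 (alpha : nat) : word :=
  la :: flatten (nseq alpha [:: lx; ly]) ++ [:: lb].
Definition w2 (alpha : nat) : word :=
  lb :: flatten (nseq alpha [:: ly; lx]) ++ [:: la].

From mathcomp Require Import all_boot ssralg ssrnum ssrint zify.
From Stdlib Require Import Relations.
Set Implicit Arguments. Unset Strict Implicit. Unset Printing Implicit Defensive.

(* Let inv(c,d)(w) count the pairs of positions of w carrying c before d.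
   The integer potential
     P(w) = inv(y,x) + alpha inv(x,a) - inv(b,a) - alpha inv(y,a)
   changes under replacement of a factor by an anagram only through the
   potential of that factor, and the two sides of every defining relation have
   the same potential, so P is well defined on M.  Rotating a word pq with the
   content of a x^alpha y^alpha b into qp changes P by |p|_b - |p|_a <= 1,
   while P(b (yx)^alpha a) - P(a (xy)^alpha b) = alpha - 1.  Conversely, b
   commutes with xy and yx, and each use of axyb = byxa between two cyclic
   shifts turns one block xy into yx. *)

Lemma count_flatten_nseq (T : Type) (P : pred T) n s :
  count P (flatten (nseq n s)) = n * count P s.
Proof. by elim: n => //= n IHn; rewrite count_cat IHn mulSn. Qed.

Lemma flatten_nseqSr (T : Type) n (s : seq T) :
  flatten (nseq n s) ++ s = flatten (nseq n.+1 s).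
Proof. by elim: n => [|n IHn] /=; rewrite ?cats0 // -catA IHn. Qed.

Lemma eqM_catr v s t : eqM s t -> eqM (s ++ v) (t ++ v).
Proof.
elim=> [_ _ [u w l r lr] | s' | s' t' _ | s' t' r' _ IH1 _ IH2].
- by apply: rst_step; rewrite -!catA; apply: step_intro.
- exact: rst_refl.
- exact: rst_sym.
- exact: rst_trans IH1 IH2.
Qed.

Lemma eqM_catl u s t : eqM s t -> eqM (u ++ s) (u ++ t).
Proof.
elim=> [_ _ [u' w l r lr] | s' | s' t' _ | s' t' r' _ IH1 _ IH2].
- by apply: rst_step; rewrite !catA -(catA _ l) -(catA _ r); apply: step_intro.
- exact: rst_refl.
- exact: rst_sym.
- exact: rst_trans IH1 IH2.
Qed.

Lemma eqM_rels l r : (l, r) \in rels -> eqM l r.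
Proof.
by move=> lr; apply: rst_step; have := step_intro [::] [::] lr; rewrite /= !cats0.
Qed.

Lemma eqM_comm_cat l s t : eqM (l ++ s) (s ++ l) -> eqM (l ++ t) (t ++ l) ->
  eqM (l ++ s ++ t) ((s ++ t) ++ l).
Proof.
move=> ls lt; apply: rst_trans (_ : eqM ((s ++ l) ++ t) _).
  by rewrite catA; apply: eqM_catr.
by rewrite -!catA; apply: eqM_catl.
Qed.

Lemma eqM_comm_flatten_nseq l s n : eqM (l ++ s) (s ++ l) ->
  eqM (l ++ flatten (nseq n s)) (flatten (nseq n s) ++ l).
Proof.
move=> ls; elim: n => [|n IHn] /=; first by rewrite cats0; apply: rst_refl.
exact: eqM_comm_cat.
Qed.

Lemma cshift_eqM_l s s' t : eqM s s' -> cshift s' t -> cshift s t.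
Proof.
by move=> ss' [p [q [s'pq tqp]]]; exists p, q; split; first exact: rst_trans s'pq.
Qed.

Lemma cshift_cat p q : cshift (p ++ q) (q ++ p).
Proof. by exists p, q; split; apply: rst_refl. Qed.

Lemma Kpath_eqM_l n s s' t : eqM s s' -> Kpath n s' t -> Kpath n s t.
Proof.
case: n => [|n] /= ss'; first exact: rst_trans.
by case=> u [s'u ut]; exists u; split; first exact: cshift_eqM_l s'u.
Qed.

Lemma Kpath_cat n m s t r : Kpath n s t -> Kpath m t r -> Kpath (n + m) s r.
Proof.
elim: n s => [|n IHn] s /=; first exact: Kpath_eqM_l.
by case=> u [su ut] tr; exists u; split; last exact: IHn tr.
Qed.

Lemma Kconnected_trans s t r : Kconnected s t -> Kconnected t r -> Kconnected s r.
Proof. by case=> n st [m tr]; exists (n + m); apply: Kpath_cat tr. Qed.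

Lemma eqM_Kconnected s t : eqM s t -> Kconnected s t.
Proof. by exists 0. Qed.

Lemma cshift_Kconnected s t : cshift s t -> Kconnected s t.
Proof. by exists 1, t; split; last exact: rst_refl. Qed.

Definition bridge (m k : nat) : word :=
  lb :: flatten (nseq m [:: lx; ly]) ++ flatten (nseq k [:: ly; lx]) ++ [:: la].

Lemma eqM_b_xy : eqM ([:: lb] ++ [:: lx; ly]) ([:: lx; ly] ++ [:: lb]).
Proof. exact: eqM_rels. Qed.

Lemma eqM_b_yx : eqM ([:: lb] ++ [:: ly; lx]) ([:: ly; lx] ++ [:: lb]).
Proof. exact: eqM_rels. Qed.

Lemma bridge_step m k : Kconnected (bridge m.+1 k) (bridge m k.+1).
Proof.
set xy := flatten (nseq m [:: lx; ly]); set yx := flatten (nseq k [:: ly; lx]).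
have shift1 : cshift (bridge m.+1 k) ([:: la; lb; lx; ly] ++ xy ++ yx).
  by have := cshift_cat [:: lb, lx, ly & xy ++ yx] [:: la]; rewrite /= -catA.
have axyb : eqM ([:: la; lb; lx; ly] ++ xy ++ yx) ([:: lb; ly; lx; la] ++ xy ++ yx).
  apply: eqM_catr; apply: (@rst_trans _ _ _ [:: la; lx; ly; lb]).
    exact: (eqM_catl [:: la] (eqM_rels _)).
  exact: eqM_rels.
have bcomm : eqM (bridge m k.+1) ((xy ++ yx) ++ [:: lb; ly; lx; la]).
  have := eqM_catr [:: ly; lx; la] (eqM_comm_cat
    (eqM_comm_flatten_nseq m eqM_b_xy) (eqM_comm_flatten_nseq k eqM_b_yx)).
  by rewrite /bridge -flatten_nseqSr -/xy -/yx -!catA.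
apply: Kconnected_trans (cshift_Kconnected shift1) _.
apply: Kconnected_trans (eqM_Kconnected axyb) _.
apply: Kconnected_trans (cshift_Kconnected (cshift_cat _ (xy ++ yx))) _.
exact/eqM_Kconnected/rst_sym.
Qed.

Lemma bridge_Kconnected m k : Kconnected (bridge m k) (bridge 0 (m + k)).
Proof.
elim: m k => [|m IHm] k; first exact/eqM_Kconnected/rst_refl.
by apply: Kconnected_trans (bridge_step m k) _; rewrite addSnnS.
Qed.

Lemma w1_Kconnected_bridge alpha : Kconnected (w1 alpha) (bridge alpha 0).
Proof.
set xy := flatten (nseq alpha [:: lx; ly]).
apply: Kconnected_trans (cshift_Kconnected (cshift_cat [:: la] (xy ++ [:: lb]))) _.
apply/eqM_Kconnected/rst_sym.
change (eqM (([:: lb] ++ xy) ++ [:: la]) ((xy ++ [:: lb]) ++ [:: la])).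
exact: eqM_catr (eqM_comm_flatten_nseq alpha eqM_b_xy).
Qed.

Lemma w1_w2_Kconnected alpha : Kconnected (w1 alpha) (w2 alpha).
Proof.
apply: Kconnected_trans (w1_Kconnected_bridge alpha) _.
by have := bridge_Kconnected alpha 0; rewrite addn0.
Qed.

Fixpoint inversions (c d : letter) (w : word) : nat :=
  if w is e :: w' then (e == c) * count_mem d w' + inversions c d w' else 0.

Lemma inversions_cat c d p q :
  inversions c d (p ++ q) =
  inversions c d p + inversions c d q + count_mem c p * count_mem d q.
Proof.
elim: p => [|e p IHp] /=; first lia.
by rewrite IHp count_cat; case: (e == c) => /=; lia.
Qed.

Lemma inversions_flatten_nseq c d n (s : word) :
  inversions c d (flatten (nseq n s)) =
  n * inversions c d s + 'C(n, 2) * (count_mem c s * count_mem d s).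
Proof.
elim: n => //= n IHn; rewrite inversions_cat IHn count_flatten_nseq binS bin1.
move: (inversions c d s) (count_mem c s) (count_mem d s) => i x y; nia.
Qed.

Lemma rels_perm l r : (l, r) \in rels -> perm_eq l r.
Proof. exact: (allP (isT : multihomogeneous rels)). Qed.

Lemma step_perm s t : step s t -> perm_eq s t.
Proof. by case=> u v l r /rels_perm lr; rewrite perm_cat2l perm_cat2r. Qed.

Lemma eqM_perm s t : eqM s t -> perm_eq s t.
Proof.
elim=> [s' t' /step_perm // | s' | s' t' _ | s' t' r' _ st _ tr].
- exact: perm_refl.
- by rewrite perm_sym.
- exact: perm_trans tr.
Qed.

Lemma cshift_perm s t : cshift s t -> perm_eq s t.
Proof.
case=> p [q [/eqM_perm spq /eqM_perm tqp]].
by apply: perm_trans spq _; rewrite perm_catC perm_sym.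
Qed.

Lemma count_w1 alpha c :
  count_mem c (w1 alpha) = (c == la) + alpha * count_mem c [:: lx; ly] + (c == lb).
Proof. by rewrite /w1 /= count_cat count_flatten_nseq /= ![_ == c]eq_sym; lia. Qed.

Section Potential.

Import GRing.Theory.
Local Open Scope ring_scope.

Variable alpha : nat.

Lemma inversions_rot c d p q :
  (inversions c d (q ++ p))%:Z =
  (inversions c d (p ++ q))%:Z + (count_mem c (p ++ q) * count_mem d p)%N%:Z
  - (count_mem d (p ++ q) * count_mem c p)%N%:Z.
Proof. rewrite !inversions_cat !count_cat; lia. Qed.

Definition potential (w : word) : int :=
  (inversions ly lx w)%:Z + alpha%:Z * (inversions lx la w)%:Z
  - (inversions lb la w)%:Z - alpha%:Z * (inversions ly la w)%:Z.

Lemma potential_ctx u l r v : perm_eq l r ->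
  potential (u ++ l ++ v) - potential (u ++ r ++ v) = potential l - potential r.
Proof.
move=> /permP lr; rewrite /potential !inversions_cat !count_cat.
rewrite !(lr (pred1 _)); lia.
Qed.

Lemma potential_rels l r : (l, r) \in rels -> potential l = potential r.
Proof. by rewrite !inE => /or3P [] /eqP [-> ->]; rewrite /potential /=; lia. Qed.

Lemma step_potential s t : step s t -> potential s = potential t.
Proof.
case=> u v l r lr; apply/eqP; rewrite -subr_eq0.
by rewrite potential_ctx ?rels_perm // (potential_rels lr) subrr.
Qed.

Lemma eqM_potential s t : eqM s t -> potential s = potential t.
Proof. by elim=> [s' t' /step_potential | | | s' t' r' _ -> _ ->]. Qed.

Lemma potential_rot (p q : word) : perm_eq (p ++ q) (w1 alpha) ->
  potential (q ++ p) - potential (p ++ q) =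
  (count_mem lb p)%:Z - (count_mem la p)%:Z.
Proof.
move=> /permP pqw; rewrite /potential !(inversions_rot _ _ p q).
rewrite !(pqw (pred1 _)) !count_w1 /=; lia.
Qed.

Lemma cshift_potential (s t : word) : perm_eq s (w1 alpha) -> cshift s t ->
  potential t - potential s <= 1.
Proof.
move=> sw [p [q [spq tqp]]].
have pqw : perm_eq (p ++ q) (w1 alpha) by rewrite -(permPl (eqM_perm spq)).
rewrite (eqM_potential spq) (eqM_potential tqp) potential_rot //.
have := permP pqw (pred1 lb); rewrite count_cat count_w1 /=; lia.
Qed.

Lemma Kpath_potential n (s t : word) : perm_eq s (w1 alpha) -> Kpath n s t ->
  potential t - potential s <= n%:Z.
Proof.
elim: n s => [|n IHn] s sw /=; first by move=> /eqM_potential ->; rewrite subrr.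
case=> u [su ut]; have uw : perm_eq u (w1 alpha).
  by rewrite -(permPl (cshift_perm su)).
have := cshift_potential sw su; have := IHn u uw ut; lia.
Qed.

Lemma potential_w2_w1 : potential (w2 alpha) - potential (w1 alpha) = alpha%:Z - 1.
Proof.
rewrite /potential /w1 /w2 /= !inversions_cat !inversions_flatten_nseq.
rewrite !count_cat !count_flatten_nseq /=; lia.
Qed.

Lemma Kpath_w1_w2 n : Kpath n (w1 alpha) (w2 alpha) -> (alpha - 1 <= n)%N.
Proof. by move=> /(Kpath_potential (perm_refl _)); rewrite potential_w2_w1; lia. Qed.

End Potential.

Theorem mainTheorem15 :
  (forall alpha : nat,
      Kconnected (w1 alpha) (w2 alpha) /\
      (forall n : nat, Kpath n (w1 alpha) (w2 alpha) -> alpha - 1 <= n)) /\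
  multihomogeneous rels /\
  (forall D : nat, exists s t : word,
      Kconnected s t /\ (forall n : nat, Kpath n s t -> D < n)).
Proof.
split; first by move=> alpha; split; [exact: w1_w2_Kconnected | exact: Kpath_w1_w2].
split; first by [].
move=> D; exists (w1 D.+2), (w2 D.+2); split; first exact: w1_w2_Kconnected.
by move=> n /Kpath_w1_w2; lia.
Qed.
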